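(* For $i=1,2$ let $\alpha_i\in[-1,1]$ and let $f_{\alpha_i}=h_i+\overline{g_i}\in S_H$ with $h_i(z)+g_i(z)=\dfrac{z(1-\alpha_i z)}{1-z^2}$, with dilatations $\omega_i=g_i'/h_i'$. If $\Re\big((1-\omega_1(z)\overline{\omega_2(z)})\,h_1'(z)\overline{h_2'(z)}\big)>0$ for all $z\in E$, then for every $0\le t\le1$ the map $f=tf_{\alpha_1}+(1-t)f_{\alpha_2}$ belongs to $S_H$ and maps $E$ onto a domain convex in the direction of the imaginary axis.
   Context: $E=\{z\in\mathbb{C}:|z|<1\}$. For a harmonic mapping $f=h+\overline{g}$ on $E$ with $h,g$ analytic, the dilatation is $\omega=g'/h'$. $S_H$ denotes the class of harmonic, univalent, sense-preserving mappings $f=h+\overline{g}$ of $E$ ($h'\ne0$, $|\omega|<1$) normalized by $f(0)=0$, $f_z(0)=1$. A domain $\Omega$ is convex in the direction of the imaginary axis if every line parallel to the imaginary axis has connected or empty intersection with $\Omega$. *)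

From Stdlib Require Import Reals Lra.
Open Scope R_scope.

Record Cx := mkC { Re : R ; Im : R }.

Definition Cadd (z w : Cx) : Cx := mkC (Re z + Re w) (Im z + Im w).
Definition Csub (z w : Cx) : Cx := mkC (Re z - Re w) (Im z - Im w).
Definition Cmul (z w : Cx) : Cx :=
  mkC (Re z * Re w - Im z * Im w) (Re z * Im w + Im z * Re w).
Definition Cconj (z : Cx) : Cx := mkC (Re z) (- Im z).
Definition Cnorm2 (z : Cx) : R := Re z * Re z + Im z * Im z.
Definition Cabs (z : Cx) : R := sqrt (Cnorm2 z).
Definition Cinv (z : Cx) : Cx := mkC (Re z / Cnorm2 z) (- Im z / Cnorm2 z).
Definition Cdiv (z w : Cx) : Cx := Cmul z (Cinv w).
Definition RtoC (r : R) : Cx := mkC r 0.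
Definition Cx0 : Cx := RtoC 0.
Definition Cx1 : Cx := RtoC 1.

Definition inE (z : Cx) : Prop := Cabs z < 1.

Definition has_cderiv (f : Cx -> Cx) (z l : Cx) : Prop :=
  forall eps, 0 < eps -> exists del, 0 < del /\
    forall w, Cabs (Csub w z) < del ->
      Cabs (Csub (Csub (f w) (f z)) (Cmul l (Csub w z))) <= eps * Cabs (Csub w z).

Definition analytic_on_E (h h' : Cx -> Cx) : Prop :=
  forall z, inE z -> has_cderiv h z (h' z).

Definition harm (h g : Cx -> Cx) (z : Cx) : Cx := Cadd (h z) (Cconj (g z)).

Definition dilat (h' g' : Cx -> Cx) (z : Cx) : Cx := Cdiv (g' z) (h' z).

Definition in_SH (h g h' g' : Cx -> Cx) : Prop :=
  analytic_on_E h h' /\ analytic_on_E g g' /\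
  (forall z, inE z -> h' z <> Cx0) /\
  (forall z, inE z -> Cabs (dilat h' g' z) < 1) /\
  (forall z1 z2, inE z1 -> inE z2 -> harm h g z1 = harm h g z2 -> z1 = z2) /\
  harm h g Cx0 = Cx0 /\
  h' Cx0 = Cx1.

(* Omega is convex in the direction of the imaginary axis: the intersection
   with every vertical line is empty or connected (i.e. an interval). *)
Definition convex_imag_dir (Om : Cx -> Prop) : Prop :=
  forall w1 w2, Om w1 -> Om w2 -> Re w1 = Re w2 ->
    forall s, 0 <= s <= 1 -> Om (mkC (Re w1) (s * Im w1 + (1 - s) * Im w2)).

Definition image_E (F : Cx -> Cx) (w : Cx) : Prop := exists z, inE z /\ F z = w.

Definition strip_map (a : R) (z : Cx) : Cx :=
  Cdiv (Cmul z (Csub Cx1 (Cmul (RtoC a) z))) (Csub Cx1 (Cmul z z)).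

Definition lincomb (t : R) (u v : Cx -> Cx) (z : Cx) : Cx :=
  Cadd (Cmul (RtoC t) (u z)) (Cmul (RtoC (1 - t)) (v z)).

(* The proof makes the shear construction of Clunie and Sheil-Small explicit.
   Substituting z = (w - 1)/(w + 1) with w = U (1 + i t), U > 0, t real
   ([cayley U t]) gives F_a = ((1 - a) w - (1 + a)/w)/4 + a/2, whose real and
   imaginary parts are [strip_re a U t] and [strip_im a U t].  For fixed t,
   [strip_re] is strictly increasing in U, and for each value c it takes, the
   equation strip_re a U t = c has a positive root U = u(t) depending smoothly on t.
   The "level curve" t |-> cayley (u t) t lies in E, F_a maps it into the vertical
   line Re = c, and Im F_a increases along it; every point of E lies on one.
   Now let f = h + conj g with h + g = F_a and |g'| < |h'| on E.  Then
   Re f = Re F_a, and along a level curve A = h' z', B = g' z' satisfy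
   Re (A + B) = 0, Im (A + B) > 0 and |B| < |A|, so (Im f(z(t)))' = Im A - Im B > 0.
   Two points with the same Re f thus lie on one level curve along which Im f is
   continuous and strictly increasing: f is injective, and by the intermediate
   value theorem f(E) is convex in the direction of the imaginary axis.
   The theorem follows: t f_1 + (1 - t) f_2 is such a shear of F_a with
   a = t a1 + (1 - t) a2, and the hypothesis on (1 - w1 conj w2) h1' conj h2'
   gives |g'|^2 < |h'|^2 for the combination. *)

From Stdlib Require Import Reals Lra.
From Coquelicot Require Import Coquelicot.
From Pilot Require Import Defs.
Open Scope R_scope.

(* The record [Cx] is the pair type [C] of Coquelicot; [toC] is a field
   isomorphism, so field identities can be proved by [field] in [C]. *)
Definition toC (z : Cx) : C := (Re z, Im z).

Lemma toC_inj z w : toC z = toC w -> z = w.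
Proof. destruct z, w; unfold toC; simpl; intros H; inversion H; auto. Qed.

Lemma toC_add z w : toC (Cadd z w) = (toC z + toC w)%C.
Proof. reflexivity. Qed.
Lemma toC_sub z w : toC (Csub z w) = (toC z - toC w)%C.
Proof. unfold toC, Csub, Cminus, Cplus, Copp; simpl; f_equal; ring. Qed.
Lemma toC_mul z w : toC (Cmul z w) = (toC z * toC w)%C.
Proof. reflexivity. Qed.
Lemma toC_conj z : toC (Defs.Cconj z) = Complex.Cconj (toC z).
Proof. reflexivity. Qed.
Lemma toC_inv z : toC (Defs.Cinv z) = Complex.Cinv (toC z).
Proof. unfold toC, Defs.Cinv, Complex.Cinv, Cnorm2; simpl. f_equal; f_equal; f_equal; ring. Qed.
Lemma toC_div z w : toC (Cdiv z w) = (toC z / toC w)%C.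
Proof. unfold Cdiv. rewrite toC_mul, toC_inv. reflexivity. Qed.
Lemma toC_R r : toC (Defs.RtoC r) = Complex.RtoC r.
Proof. reflexivity. Qed.
Lemma toC_0 : toC Cx0 = 0%C.
Proof. reflexivity. Qed.
Lemma toC_1 : toC Cx1 = 1%C.
Proof. reflexivity. Qed.
Lemma Cabs_toC z : Cabs z = Cmod (toC z).
Proof. unfold Cabs, Cmod, Cnorm2, toC; simpl. f_equal; ring. Qed.

Ltac push_toC := repeat rewrite ?toC_add, ?toC_sub, ?toC_mul, ?toC_conj, ?toC_div,
   ?toC_inv, ?toC_R, ?toC_0, ?toC_1.

Lemma Cx_ext z w : Re z = Re w -> Im z = Im w -> z = w.
Proof. destruct z, w; simpl; intros; subst; auto. Qed.

Lemma Cnorm2_ge0 z : 0 <= Cnorm2 z.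
Proof. unfold Cnorm2. nra. Qed.

Lemma Cnorm2_mul z w : Cnorm2 (Cmul z w) = Cnorm2 z * Cnorm2 w.
Proof. unfold Cnorm2, Cmul; simpl; ring. Qed.

Lemma Cnorm2_pos z : z <> Cx0 -> 0 < Cnorm2 z.
Proof.
  intros Hz. destruct (Rle_lt_dec (Cnorm2 z) 0) as [Hle|]; [|auto].
  exfalso. apply Hz. clear Hz. destruct z as [r i]. unfold Cnorm2 in Hle; simpl in Hle.
  assert (r = 0) by nra. assert (i = 0) by nra. subst. reflexivity.
Qed.

Lemma inE_norm z : inE z -> Cnorm2 z < 1.
Proof.
  unfold inE, Cabs. intro H. destruct (Rlt_le_dec (Cnorm2 z) 1) as [|Hge]; auto.
  apply sqrt_le_1_alt in Hge. rewrite sqrt_1 in Hge. lra.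
Qed.

Lemma nonzero_of_norm2_lt x y : Cnorm2 x < Cnorm2 y -> y <> Cx0.
Proof.
  intros H ->. pose proof (Cnorm2_ge0 x).
  replace (Cnorm2 Cx0) with 0 in H by (unfold Cnorm2; simpl; ring). lra.
Qed.

Lemma Cabs_div_lt1 x y : Cnorm2 x < Cnorm2 y -> Cabs (Cdiv x y) < 1.
Proof.
  intros H. pose proof (Cnorm2_ge0 x).
  assert (Hy : toC y <> 0%C).
  { intro E. apply (nonzero_of_norm2_lt x y H), toC_inj. rewrite E. reflexivity. }
  rewrite Cabs_toC, toC_div, Cmod_div by auto. rewrite <- !Cabs_toC. unfold Cabs.
  rewrite <- Rdiv_lt_1 by (apply sqrt_lt_R0; lra). apply sqrt_lt_1_alt. lra.
Qed.

Lemma cderiv_lincomb f g l m z al be : has_cderiv f z l -> has_cderiv g z m ->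
  has_cderiv (fun w => Cadd (Cmul (Defs.RtoC al) (f w)) (Cmul (Defs.RtoC be) (g w))) z
    (Cadd (Cmul (Defs.RtoC al) l) (Cmul (Defs.RtoC be) m)).
Proof.
  intros Hf Hg eps Heps.
  set (M := Rabs al + Rabs be + 1).
  pose proof (Rabs_pos al); pose proof (Rabs_pos be).
  assert (HM : 0 < M) by (unfold M; lra).
  destruct (Hf (eps / M)) as [d1 [Hd1 H1]]; [apply Rdiv_lt_0_compat; lra|].
  destruct (Hg (eps / M)) as [d2 [Hd2 H2]]; [apply Rdiv_lt_0_compat; lra|].
  exists (Rmin d1 d2). split; [apply Rmin_pos; auto|].
  intros w Hw.
  specialize (H1 w (Rlt_le_trans _ _ _ Hw (Rmin_l _ _))).
  specialize (H2 w (Rlt_le_trans _ _ _ Hw (Rmin_r _ _))).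
  rewrite !Cabs_toC in *. push_toC.
  set (E1 := (toC (f w) - toC (f z) - toC l * (toC w - toC z))%C) in *.
  set (E2 := (toC (g w) - toC (g z) - toC m * (toC w - toC z))%C) in *.
  match goal with |- Cmod ?e <= _ =>
    replace e with (Complex.RtoC al * E1 + Complex.RtoC be * E2)%C by (unfold E1, E2; ring) end.
  eapply Rle_trans; [apply Cmod_triangle|]. rewrite !Cmod_mult, !Cmod_R.
  set (D := Cmod (toC w - toC z)) in *.
  assert (HD : 0 <= D) by apply Cmod_ge_0.
  set (X := eps / M * D) in *.
  assert (HX : 0 <= X) by (apply Rmult_le_pos; [apply Rlt_le, Rdiv_lt_0_compat|]; lra).
  apply Rle_trans with (M * X).
  - apply Rle_trans with (Rabs al * X + Rabs be * X); [apply Rplus_le_compat; apply Rmult_le_compat_l; auto|].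
    unfold M. nra.
  - right. unfold X. field. lra.
Qed.

Lemma Cmod_le_2max (z : C) : Cmod z <= 2 * Rmax (Rabs (fst z)) (Rabs (snd z)).
Proof.
  eapply Rle_trans; [apply Cmod_2Rmax|]. apply Rmult_le_compat_r.
  - eapply Rle_trans; [apply Rabs_pos|apply Rmax_l].
  - assert (Hsqrt : sqrt 2 <= sqrt (2 * 2)) by (apply sqrt_le_1_alt; lra).
    rewrite sqrt_square in Hsqrt; lra.
Qed.

Lemma curve_expansion x y x' y' t :
  derivable_pt_lim x t x' -> derivable_pt_lim y t y' ->
  forall eta, 0 < eta -> exists del, 0 < del /\ forall h, Rabs h < del ->
   Cmod ((x (t+h)%R, y (t+h)%R) - (x t, y t) - (x', y') * Complex.RtoC h)%C <= 2 * eta * Rabs h.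
Proof.
  intros Hx Hy eta He.
  destruct (Hx eta He) as [dx Hdx]. destruct (Hy eta He) as [dy Hdy].
  exists (Rmin dx dy). split; [apply Rmin_pos; apply cond_pos|].
  intros h Hh.
  destruct (Req_dec h 0) as [->|Hn].
  { rewrite Rplus_0_r, Rabs_R0.
    match goal with |- Cmod ?e <= _ =>
      replace e with (Complex.RtoC 0) by (apply injective_projections; simpl; ring) end.
    rewrite Cmod_0. lra. }
  specialize (Hdx h Hn (Rlt_le_trans _ _ _ Hh (Rmin_l _ _))).
  specialize (Hdy h Hn (Rlt_le_trans _ _ _ Hh (Rmin_r _ _))).
  assert (Herr : forall u v w, Rabs ((u - v)/h - w) < eta -> Rabs (u - v - w * h) <= eta * Rabs h).
  { intros u v w Hl.
    replace (u - v - w*h) with (((u-v)/h - w) * h) by (field; auto).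
    rewrite Rabs_mult. apply Rmult_le_compat_r; [apply Rabs_pos|lra]. }
  eapply Rle_trans; [apply Cmod_le_2max|].
  rewrite Rmult_assoc. apply Rmult_le_compat_l; [lra|].
  apply Rmax_lub; simpl.
  - apply Rle_trans with (Rabs (x (t+h) - x t - x' * h)); [right; f_equal; ring|auto].
  - apply Rle_trans with (Rabs (y (t+h) - y t - y' * h)); [right; f_equal; ring|auto].
Qed.

Lemma curve_lipschitz x y x' y' t :
  derivable_pt_lim x t x' -> derivable_pt_lim y t y' ->
  exists del, 0 < del /\ forall h, Rabs h < del ->
   Cmod ((x (t+h)%R, y (t+h)%R) - (x t, y t))%C <= (Cmod (x', y') + 1) * Rabs h.
Proof.
  intros Hx Hy.
  destruct (curve_expansion x y x' y' t Hx Hy (1 / 2)) as [d [Hd Hexp]]; [lra|].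
  exists d. split; auto. intros h Hh. specialize (Hexp h Hh).
  match goal with |- Cmod ?e <= _ =>
    replace e with ((x', y') * Complex.RtoC h +
      ((x (t+h)%R, y (t+h)%R) - (x t, y t) - (x', y') * Complex.RtoC h))%C by ring end.
  eapply Rle_trans; [apply Cmod_triangle|]. rewrite Cmod_mult, Cmod_R. lra.
Qed.

Lemma chain_estimate (H : Cx -> Cx) L x y x' y' t :
  derivable_pt_lim x t x' -> derivable_pt_lim y t y' ->
  has_cderiv H (mkC (x t) (y t)) L ->
  forall eps, 0 < eps -> exists del, 0 < del /\ forall h, Rabs h < del ->
   Cmod (toC (H (mkC (x (t+h)%R) (y (t+h)%R))) - toC (H (mkC (x t) (y t)))
         - (toC L * (x', y')) * Complex.RtoC h)%C <= eps * Rabs h.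
Proof.
  intros Hx Hy HH eps Heps.
  set (cG := Cmod (x', y')). set (cL := Cmod (toC L)).
  assert (HcG : 0 <= cG) by apply Cmod_ge_0. assert (HcL : 0 <= cL) by apply Cmod_ge_0.
  destruct (curve_expansion x y x' y' t Hx Hy (eps / (4 * (cL + 1)))) as [d1 [Hd1 Hexp]].
  { apply Rdiv_lt_0_compat; lra. }
  destruct (curve_lipschitz x y x' y' t Hx Hy) as [d2 [Hd2 Hmove]].
  destruct (HH (eps / (2 * (cG + 1)))) as [dH [HdH HHb]]; [apply Rdiv_lt_0_compat; lra|].
  exists (Rmin (Rmin d1 d2) (dH / (cG + 1))). split.
  { repeat apply Rmin_pos; auto. apply Rdiv_lt_0_compat; lra. }
  intros h Hh.
  destruct (Rmin_Rgt_l _ _ _ Hh) as [Hh12 HhH]. destruct (Rmin_Rgt_l _ _ _ Hh12) as [Hh1 Hh2].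
  assert (HhH' : (cG + 1) * Rabs h < dH).
  { rewrite Rmult_comm. apply (proj2 (Rlt_div_r (Rabs h) dH (cG + 1) ltac:(lra))). exact HhH. }
  specialize (Hexp h Hh1). specialize (Hmove h Hh2). fold cG in Hmove.
  pose proof (Rabs_pos h) as Hph.
  set (g1 := ((x (t+h)%R, y (t+h)%R) : C)) in *.
  set (g0 := ((x t, y t) : C)) in *.
  set (e := (g1 - g0 - (x', y') * Complex.RtoC h)%C) in *.
  assert (HdH' : Cabs (Csub (mkC (x (t+h)%R) (y (t+h)%R)) (mkC (x t) (y t))) < dH).
  { rewrite Cabs_toC, toC_sub. change (Cmod (g1 - g0) < dH).
    lra. }
  specialize (HHb _ HdH').
  rewrite !Cabs_toC, !toC_sub, toC_mul, toC_sub in HHb. fold g1 g0 in HHb.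
  set (D1 := (toC (H (mkC (x (t + h)%R) (y (t + h)%R))) - toC (H (mkC (x t) (y t))) -
            toC L * (g1 - g0))%C) in *.
  match goal with |- Cmod ?lhs <= _ =>
    replace lhs with (D1 + toC L * e)%C by (unfold D1, e; ring) end.
  eapply Rle_trans; [apply Cmod_triangle|]. rewrite Cmod_mult. fold cL.
  assert (A1 : Cmod D1 <= eps / 2 * Rabs h).
  { eapply Rle_trans; [exact HHb|].
    apply Rle_trans with (eps / (2 * (cG + 1)) * ((cG + 1) * Rabs h)).
    - apply Rmult_le_compat_l; auto. apply Rlt_le, Rdiv_lt_0_compat; lra.
    - right. field. lra. }
  assert (A2 : cL * Cmod e <= eps / 2 * Rabs h).
  { apply Rle_trans with ((cL + 1) * Cmod e); [pose proof (Cmod_ge_0 e); nra|].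
    apply Rle_trans with ((cL + 1) * (2 * (eps / (4 * (cL + 1))) * Rabs h)).
    - apply Rmult_le_compat_l; lra.
    - right. field. lra. }
  lra.
Qed.

Lemma chain_rule (H : Cx -> Cx) L x y x' y' t :
  derivable_pt_lim x t x' -> derivable_pt_lim y t y' ->
  has_cderiv H (mkC (x t) (y t)) L ->
  derivable_pt_lim (fun s => Re (H (mkC (x s) (y s)))) t (Re (Cmul L (mkC x' y'))) /\
  derivable_pt_lim (fun s => Im (H (mkC (x s) (y s)))) t (Im (Cmul L (mkC x' y'))).
Proof.
  intros Hx Hy HH.
  assert (Hcoord : forall c : C, Rabs (fst c) <= Cmod c /\ Rabs (snd c) <= Cmod c).
  { intro c. split; (eapply Rle_trans; [|apply Rmax_Cmod]); [apply Rmax_l|apply Rmax_r]. }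
  split; intros eps Heps;
  destruct (chain_estimate H L x y x' y' t Hx Hy HH (eps/2)) as [d [Hd Hb]]; try lra;
  exists (mkposreal d Hd); intros h Hn Hh; specialize (Hb h Hh); simpl in Hh;
  assert (Hh0 : 0 < Rabs h) by (apply Rabs_pos_lt; auto);
  match type of Hb with Cmod ?c <= _ => destruct (Hcoord c) as [Hre Him] end;
  simpl in Hre, Him;
  apply Rmult_lt_reg_r with (Rabs h); auto;
  rewrite <- Rabs_mult; simpl.
  - replace (((Re (H (mkC (x (t + h)) (y (t + h)))) - Re (H (mkC (x t) (y t)))) / h -
       (Re L * x' - Im L * y')) * h) with
       (Re (H (mkC (x (t + h)) (y (t + h)))) + - Re (H (mkC (x t) (y t))) +
      - ((Re L * x' - Im L * y') * h - (Re L * y' + Im L * x') * 0)) by (field; auto).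
    nra.
  - replace (((Im (H (mkC (x (t + h)) (y (t + h)))) - Im (H (mkC (x t) (y t)))) / h -
       (Re L * y' + Im L * x')) * h) with
       (Im (H (mkC (x (t + h)) (y (t + h)))) + - Im (H (mkC (x t) (y t))) +
      - ((Re L * x' - Im L * y') * 0 + (Re L * y' + Im L * x') * h)) by (field; auto).
    nra.
Qed.

Lemma strictly_increasing_of_deriv (f : R -> R) :
  (forall t, exists d, derivable_pt_lim f t d /\ 0 < d) ->
  forall x y, x < y -> f x < f y.
Proof.
  intros H x y Hxy.
  assert (Hd : forall c, derivable_pt_lim f c (Derive f c) /\ 0 < Derive f c).
  { intros c. destruct (H c) as [d [Hd Hp]].
    replace (Derive f c) with d by (symmetry; apply is_derive_unique, is_derive_Reals; auto).
    auto. }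
  destruct (MVT_cor2 f (Derive f) x y Hxy) as [c [Hc _]]; [intros c _; apply Hd|].
  destruct (Hd c) as [_ Hp]. nra.
Qed.

(** ** Level curves of the strip map F_a *)

(* Coordinates: w = U (1 + i t) ranges over the right half plane when U > 0,
   and z = (w - 1)/(w + 1) = [cayley U t] ranges over E. *)
Definition sT (t : R) : R := 1 + t * t.
(* |w + 1|^2 *)
Definition denC (U t : R) : R := (U + 1) * (U + 1) + (U * t) * (U * t).
Definition cayley (U t : R) : Cx :=
  mkC ((U * U * sT t - 1) / denC U t) (2 * U * t / denC U t).

(* Real and imaginary parts of F_a at [cayley U t]. *)
Definition strip_re (a U t : R) : R := ((1 - a) * U - (1 + a) / (U * sT t)) / 4 + a / 2.
Definition strip_im (a U t : R) : R := t * ((1 - a) * U + (1 + a) / (U * sT t)) / 4.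

Lemma sT_pos t : 0 < sT t.
Proof. unfold sT. nra. Qed.

Lemma denC_pos U t : 0 < U -> 0 < denC U t.
Proof. unfold denC. nra. Qed.

Lemma cayley_inE U t : 0 < U -> inE (cayley U t).
Proof.
  intros HU. unfold inE, Cabs, Cnorm2, cayley; simpl.
  pose proof (denC_pos U t HU) as Hd. pose proof (sT_pos t).
  apply Rlt_le_trans with (sqrt 1); [|rewrite sqrt_1; lra]. apply sqrt_lt_1_alt.
  split; [apply Rplus_le_le_0_compat; apply Rle_0_sqr|].
  unfold sT in *.
  replace ((U * U * (1 + t * t) - 1) / denC U t * ((U * U * (1 + t * t) - 1) / denC U t) +
    2 * U * t / denC U t * (2 * U * t / denC U t)) with
    (((U * U * (1 + t * t) - 1) * (U * U * (1 + t * t) - 1) + (2*U*t)*(2*U*t))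
      / (denC U t * denC U t)) by (field; lra).
  rewrite <- Rdiv_lt_1 by nra. unfold denC in *. nra.
Qed.

Lemma cayley_toC U t : 0 < U ->
  toC (cayley U t) = ((((U, (U * t)%R) : C) - 1) / (((U, (U * t)%R) : C) + 1))%C.
Proof.
  intros HU. set (w := ((U, (U * t)%R) : C)).
  assert (Hw1 : (w + 1)%C <> 0%C).
  { intro H. apply (f_equal fst) in H. unfold w in H. simpl in H. lra. }
  assert (E : (toC (cayley U t) * (w + 1))%C = (w - 1)%C).
  { pose proof (denC_pos U t HU). unfold w, cayley, toC, denC, sT in *; simpl.
    apply injective_projections; simpl; field; lra. }
  rewrite <- E. field. auto.
Qed.

Lemma strip_map_halfplane (a : R) (w : C) : w <> 0%C -> (w + 1)%C <> 0%C ->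
  let z := ((w - 1) / (w + 1))%C in
  ((z * (1 - Complex.RtoC a * z)) / (1 - z * z))%C =
  ((Complex.RtoC (1 - a) * w - Complex.RtoC (1 + a) / w) / 4 + Complex.RtoC a / 2)%C.
Proof.
  intros Hw Hw1 z. unfold z.
  assert (H40 : (4 : C) <> 0%C) by (intro H'; inversion H'; lra).
  assert (H4 : ((w + 1) * (w + 1) - (w - 1) * (w - 1))%C <> 0%C).
  { replace ((w + 1) * (w + 1) - (w - 1) * (w - 1))%C with (4 * w)%C by ring.
    apply Cmult_neq_0; auto. }
  rewrite !RtoC_minus, !RtoC_plus.
  field. repeat split; auto.
Qed.

Lemma strip_map_cayley a U t : 0 < U ->
  strip_map a (cayley U t) = mkC (strip_re a U t) (strip_im a U t).
Proof.
  intros HU. apply toC_inj. unfold strip_map. push_toC. rewrite cayley_toC by auto.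
  set (w := ((U, (U * t)%R) : C)).
  assert (Hw1 : (w + 1)%C <> 0%C).
  { intro H. apply (f_equal fst) in H. unfold w in H. simpl in H. lra. }
  assert (Hw : w <> 0%C).
  { intro H. apply (f_equal fst) in H. unfold w in H. simpl in H. lra. }
  pose proof (strip_map_halfplane a w Hw Hw1) as HS. simpl in HS. rewrite HS.
  pose proof (sT_pos t).
  unfold toC, strip_re, strip_im, w, sT in *; simpl.
  apply injective_projections; simpl; field; nra.
Qed.

Lemma cayley_onto z : inE z -> exists U t, 0 < U /\ cayley U t = z.
Proof.
  intros Hz. apply inE_norm in Hz. destruct z as [x y]. unfold Cnorm2 in Hz; simpl in Hz.
  set (d := (1 - x) * (1 - x) + y * y).
  assert (Hd : 0 < d) by (unfold d; nra).
  exists ((1 - x * x - y * y) / d), (2 * y / (1 - x * x - y * y)).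
  split; [apply Rdiv_lt_0_compat; lra|].
  unfold cayley, denC, sT, d in *.
  assert (HA : 0 < 1 - x * x - y * y + ((1 - x) * (1 - x) + y * y)) by lra.
  assert (0 < (1 - x * x - y * y + ((1 - x) * (1 - x) + y * y)) *
      (1 - x * x - y * y + ((1 - x) * (1 - x) + y * y)) + 2 * y * (2 * y)) by nra.
  f_equal; field; repeat split; lra.
Qed.

Lemma strip_re_increasing a U V t : -1 <= a <= 1 -> 0 < U < V ->
  strip_re a U t < strip_re a V t.
Proof.
  intros Ha HUV. pose proof (sT_pos t).
  assert (E : strip_re a V t - strip_re a U t =
    (V - U) * ((1 - a) + (1 + a) / (U * V * sT t)) / 4)
    by (unfold strip_re; field; repeat split; apply Rgt_not_eq; nra).
  assert (0 < (1 - a) + (1 + a) / (U * V * sT t)).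
  { assert (0 < / (U * V * sT t)).
    { apply Rinv_0_lt_compat. repeat apply Rmult_lt_0_compat; lra. }
    unfold Rdiv. nra. }
  nra.
Qed.

Lemma strip_re_inj a U V t : -1 <= a <= 1 -> 0 < U -> 0 < V ->
  strip_re a U t = strip_re a V t -> U = V.
Proof.
  intros Ha HU HV E.
  destruct (Rtotal_order U V) as [Hl|[Heq|Hl]]; auto.
  - pose proof (strip_re_increasing a U V t Ha (conj HU Hl)). lra.
  - pose proof (strip_re_increasing a V U t Ha (conj HV Hl)). lra.
Qed.

Lemma strip_re_of_root a K U t : 0 < U ->
  (1 - a) * U * U - K * U - (1 + a) / sT t = 0 -> strip_re a U t = K / 4 + a / 2.
Proof.
  intros HU HQ. pose proof (sT_pos t).
  unfold strip_re. apply Rplus_eq_compat_r, Rmult_eq_compat_r.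
  apply Rmult_eq_reg_r with U; [|lra].
  replace (((1 - a) * U - (1 + a) / (U * sT t)) * U) with
    ((1 - a) * U * U - (1 + a) / sT t) by (field; lra). lra.
Qed.

Lemma derivable_of_ex_derive (u : R -> R) : (forall s, ex_derive u s) ->
  exists u', forall s, derivable_pt_lim u s (u' s).
Proof. intros Hu. exists (Derive u). intro s. apply is_derive_Reals, Derive_correct; auto. Qed.

Lemma level_root_lt1 a K U0 t0 : -1 <= a < 1 -> 0 < U0 ->
  K = (1 - a) * U0 - (1 + a) / (U0 * sT t0) ->
  exists u u', (forall s, derivable_pt_lim u s (u' s)) /\ (forall s, 0 < u s) /\
    (forall s, (1 - a) * u s * u s - K * u s - (1 + a) / sT s = 0).
Proof.
  intros Ha HU HK. pose proof (sT_pos t0) as Hs0.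
  set (p := 1 - a) in *. set (q := 1 + a) in *.
  assert (Hp : 0 < p) by (unfold p; lra). assert (Hq : 0 <= q) by (unfold q; lra).
  assert (Hdisc : forall s, 0 < K * K + 4 * p * q / sT s /\
                            0 < K + sqrt (K * K + 4 * p * q / sT s)).
  { intro s. pose proof (sT_pos s).
    destruct (Rle_lt_dec q 0).
    - assert (Hq0 : q = 0) by lra. rewrite Hq0 in *.
      replace K with (p * U0) in * by (rewrite HK; field; lra).
      replace (4 * p * 0 / sT s) with 0 by (field; lra).
      assert (0 < p * U0) by nra.
      rewrite Rplus_0_r, sqrt_square by lra. split; nra.
    - assert (0 < 4 * p * q / sT s) by (apply Rdiv_lt_0_compat; nra).
      assert (Hsq : Rabs K < sqrt (K * K + 4 * p * q / sT s)).
      { rewrite <- sqrt_Rsqr_abs. apply sqrt_lt_1_alt. unfold Rsqr. split; nra. }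
      split; [nra|]. pose proof (Rle_abs (- K)). rewrite Rabs_Ropp in *. lra. }
  set (u := fun s => (K + sqrt (K * K + 4 * p * q / sT s)) / (2 * p)).
  destruct (derivable_of_ex_derive u) as [u' Hu'].
  { intro s. pose proof (Hdisc s) as [H1 H2]. pose proof (sT_pos s). unfold u, sT in *.
    auto_derive. repeat split; lra. }
  exists u, u'. repeat split; auto.
  - intro s. destruct (Hdisc s). unfold u. apply Rdiv_lt_0_compat; lra.
  - intro s. destruct (Hdisc s) as [H1 _]. pose proof (sT_pos s). unfold u. fold p q.
    set (S := sqrt (K * K + 4 * p * q / sT s)).
    assert (HS : S * S = K * K + 4 * p * q / sT s) by (apply sqrt_sqrt; lra).
    replace (p * ((K + S) / (2 * p)) * ((K + S) / (2 * p)) - K * ((K + S) / (2 * p)))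
      with ((S * S - K * K) / (4 * p)) by (field; lra).
    rewrite HS. field. lra.
Qed.

Lemma level_root_eq1 K U0 t0 : 0 < U0 -> K = (1 - 1) * U0 - (1 + 1) / (U0 * sT t0) ->
  exists u u', (forall s, derivable_pt_lim u s (u' s)) /\ (forall s, 0 < u s) /\
    (forall s, (1 - 1) * u s * u s - K * u s - (1 + 1) / sT s = 0).
Proof.
  intros HU HK. pose proof (sT_pos t0) as Hs0.
  assert (HKneg : K < 0).
  { rewrite HK. assert (0 < 2 / (U0 * sT t0)) by (apply Rdiv_lt_0_compat; nra).
    replace (1 + 1) with 2 by ring. lra. }
  set (u := fun s => - 2 / (K * sT s)).
  destruct (derivable_of_ex_derive u) as [u' Hu'].
  { intro s. pose proof (sT_pos s). unfold u, sT in *. auto_derive. repeat split; nra. }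
  exists u, u'. repeat split; auto.
  - intro s. pose proof (sT_pos s). unfold u.
    replace (- 2 / (K * sT s)) with (2 / ((- K) * sT s)) by (field; nra).
    apply Rdiv_lt_0_compat; nra.
  - intro s. pose proof (sT_pos s). unfold u. field. nra.
Qed.

Lemma level_curve_exists a c U0 t0 : -1 <= a <= 1 -> 0 < U0 -> strip_re a U0 t0 = c ->
  exists u u', (forall s, derivable_pt_lim u s (u' s)) /\ (forall s, 0 < u s) /\
    (forall s, strip_re a (u s) s = c).
Proof.
  intros Ha HU Hc. pose proof (sT_pos t0).
  set (K := 4 * (c - a / 2)).
  assert (HK : K = (1 - a) * U0 - (1 + a) / (U0 * sT t0))
    by (unfold K; rewrite <- Hc; unfold strip_re; field; lra).
  assert (Hroot : exists u u', (forall s, derivable_pt_lim u s (u' s)) /\ (forall s, 0 < u s) /\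
            (forall s, (1 - a) * u s * u s - K * u s - (1 + a) / sT s = 0)).
  { destruct (Rlt_le_dec a 1).
    - apply (level_root_lt1 a K U0 t0); auto. lra.
    - replace a with 1 in * by lra. apply (level_root_eq1 K U0 t0); auto. }
  destruct Hroot as [u [u' [Hd [Hp HQ]]]].
  exists u, u'. repeat split; auto.
  intro s. replace c with (K / 4 + a / 2) by (unfold K; field).
  apply strip_re_of_root; auto.
Qed.

Lemma level_curve_derivable u u' t :
  (forall s, derivable_pt_lim u s (u' s)) -> (forall s, 0 < u s) ->
  (exists x', derivable_pt_lim (fun s => Re (cayley (u s) s)) t x') /\
  (exists y', derivable_pt_lim (fun s => Im (cayley (u s) s)) t y').
Proof.
  intros Hd Hp.
  assert (Hu : ex_derive u t) by (exists (u' t); apply is_derive_Reals; auto).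
  pose proof (denC_pos _ t (Hp t)) as Hden. unfold denC in Hden.
  split; [exists (Derive (fun s => Re (cayley (u s) s)) t)
         |exists (Derive (fun s => Im (cayley (u s) s)) t)];
  apply is_derive_Reals, Derive_correct; unfold cayley, denC, sT; simpl;
  auto_derive; repeat split; auto; lra.
Qed.

(* With
   r = q / (v (1 + t^2)) and D = p v + r, the derivative equals
   (D^2 + t^2 (p v - r)^2) / (4 (1 + t^2) D). *)
Lemma strip_im_slope_pos p q v v' t : 0 <= p -> 0 <= q -> p + q = 2 -> 0 < v ->
  p * v' + q * (v' * sT t + v * (2 * t)) / ((v * sT t) * (v * sT t)) = 0 ->
  0 < (p * v + q / (v * sT t)) / 4 +
      t * (p * v' - q * (v' * sT t + v * (2 * t)) / ((v * sT t) * (v * sT t))) / 4.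
Proof.
  intros Hp Hq Hpq Hv Hre.
  pose proof (sT_pos t) as Hs. set (s := sT t) in *.
  set (r := q / (v * s)).
  assert (Hr : 0 <= r) by (apply Rmult_le_pos; [lra|apply Rlt_le, Rinv_0_lt_compat; nra]).
  assert (Hq' : q = r * (v * s)) by (unfold r; field; nra).
  set (D := p * v + r).
  assert (HD : 0 < D).
  { destruct (Rle_lt_dec p 0); [|unfold D; nra].
    assert (0 < r) by (unfold r; apply Rdiv_lt_0_compat; nra). unfold D; nra. }
  assert (Hv' : v' = - (2 * r * t * v / s) / D).
  { apply Rmult_eq_reg_r with D; [|lra].
    replace (- (2 * r * t * v / s) / D * D) with (- (2 * r * t * v / s)) by (field; lra).
    replace (v' * D) with (v * (p * v' + q * (v' * s + v * (2 * t)) / ((v * s) * (v * s)))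
      - 2 * r * t * v / s) by (unfold D; rewrite Hq'; field; lra).
    rewrite Hre. ring. }
  rewrite Hv'. fold r. rewrite Hq'.
  match goal with |- 0 < ?e =>
    replace e with ((D * D + t * t * ((p * v - r) * (p * v - r))) / (4 * s * D))
    by (unfold D, s, sT in *; field; repeat split; lra) end.
  apply Rdiv_lt_0_compat; [|repeat apply Rmult_lt_0_compat; lra].
  apply Rplus_lt_le_0_compat; [nra|]. apply Rmult_le_pos; apply Rle_0_sqr.
Qed.

Lemma strip_im_increasing_on_level a c u u' t : -1 <= a <= 1 ->
  (forall s, derivable_pt_lim u s (u' s)) -> (forall s, 0 < u s) ->
  (forall s, strip_re a (u s) s = c) ->
  exists d, derivable_pt_lim (fun s => strip_im a (u s) s) t d /\ 0 < d.
Proof.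
  intros Ha Hd Hp Hc.
  assert (Hu : is_derive u t (u' t)) by (apply is_derive_Reals; auto).
  assert (Hue : ex_derive u t) by (exists (u' t); auto).
  assert (HDu : Derive (fun x => u x) t = u' t) by (apply is_derive_unique; auto).
  pose proof (Hp t) as Hv. pose proof (sT_pos t) as Hs.
  assert (Hre : (1 - a) * u' t + (1 + a) * (u' t * sT t + u t * (2 * t))
                  / ((u t * sT t) * (u t * sT t)) = 0).
  { assert (Hconst : is_derive (fun s => strip_re a (u s) s) t 0).
    { apply is_derive_ext with (fun _ => c); [intro s; auto|].
      apply is_derive_Reals, derivable_pt_lim_const. }
    assert (Hform : is_derive (fun s => strip_re a (u s) s) t
      (((1 - a) * u' t + (1 + a) * (u' t * sT t + u t * (2 * t))
                  / ((u t * sT t) * (u t * sT t))) / 4)).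
    { unfold strip_re, sT in *. auto_derive; [repeat split; auto; nra|].
      rewrite HDu. field. nra. }
    pose proof (is_derive_unique _ _ _ Hform) as E.
    rewrite (is_derive_unique _ _ _ Hconst) in E. lra. }
  exists (((1 - a) * u t + (1 + a) / (u t * sT t)) / 4 +
      t * ((1 - a) * u' t - (1 + a) * (u' t * sT t + u t * (2 * t))
                 / ((u t * sT t) * (u t * sT t))) / 4).
  split.
  - apply is_derive_Reals. unfold strip_im, sT in *. auto_derive; [repeat split; auto; nra|].
    rewrite HDu. field. nra.
  - apply strip_im_slope_pos; auto; lra.
Qed.

(** ** The shear lemma *)

(* If A = h' z', B = g' z' are the velocities of h and g along a curve on which
   Re (h + g) is constant and Im (h + g) increases, and |g'| < |h'|, then
   Im (h - g) increases too. *)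
Lemma shear_slope_pos (A B : Cx) :
  Re A + Re B = 0 -> 0 < Im A + Im B -> Cnorm2 B < Cnorm2 A -> 0 < Im A - Im B.
Proof. unfold Cnorm2. intros. nra. Qed.

Section Shear.

Variables (a : R) (h g h' g' : Cx -> Cx).
Hypothesis Ha : -1 <= a <= 1.
Hypothesis Hh : analytic_on_E h h'.
Hypothesis Hg : analytic_on_E g g'.
Hypothesis Hdil : forall z, inE z -> Cnorm2 (g' z) < Cnorm2 (h' z).
Hypothesis Hsum : forall z, inE z -> Cadd (h z) (g z) = strip_map a z.

Let f := harm h g.

Lemma sum_on_cayley U t : 0 < U ->
  Cadd (h (cayley U t)) (g (cayley U t)) = mkC (strip_re a U t) (strip_im a U t).
Proof. intros HU. rewrite Hsum, strip_map_cayley by (auto using cayley_inE). reflexivity. Qed.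

Lemma shear_re_on_cayley U t : 0 < U -> Re (f (cayley U t)) = strip_re a U t.
Proof. intros HU. exact (f_equal Re (sum_on_cayley U t HU)). Qed.

Lemma shear_increasing_on_level c u u' t :
  (forall s, derivable_pt_lim u s (u' s)) -> (forall s, 0 < u s) ->
  (forall s, strip_re a (u s) s = c) ->
  exists d, derivable_pt_lim (fun s => Im (f (cayley (u s) s))) t d /\ 0 < d.
Proof.
  intros Hd Hp Hc.
  destruct (level_curve_derivable u u' t Hd Hp) as [[x' Hx'] [y' Hy']].
  set (x := fun s => Re (cayley (u s) s)) in *. set (y := fun s => Im (cayley (u s) s)) in *.
  assert (Egam : forall s, cayley (u s) s = mkC (x s) (y s)) by (intro s; reflexivity).
  assert (Hin : inE (mkC (x t) (y t))) by (rewrite <- Egam; apply cayley_inE; auto).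
  destruct (chain_rule h _ x y x' y' t Hx' Hy' (Hh _ Hin)) as [HhR HhI].
  destruct (chain_rule g _ x y x' y' t Hx' Hy' (Hg _ Hin)) as [HgR HgI].
  set (A := Cmul (h' (mkC (x t) (y t))) (mkC x' y')) in *.
  set (B := Cmul (g' (mkC (x t) (y t))) (mkC x' y')) in *.
  assert (Hsum_curve : forall s, Cadd (h (mkC (x s) (y s))) (g (mkC (x s) (y s)))
            = mkC c (strip_im a (u s) s)).
  { intro s. rewrite <- Egam, (sum_on_cayley _ s (Hp s)), Hc. reflexivity. }
  assert (HRe : Re A + Re B = 0).
  { apply (uniqueness_limite (fun s => Re (h (mkC (x s) (y s))) + Re (g (mkC (x s) (y s)))) t).
    - apply derivable_pt_lim_plus; auto.
    - apply is_derive_Reals. apply is_derive_ext with (fun _ => c).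
      + intro s. symmetry. exact (f_equal Re (Hsum_curve s)).
      + apply is_derive_Reals, derivable_pt_lim_const. }
  destruct (strip_im_increasing_on_level a c u u' t Ha Hd Hp Hc) as [dp [Hdp Hdp0]].
  assert (HIm : Im A + Im B = dp).
  { apply (uniqueness_limite (fun s => Im (h (mkC (x s) (y s))) + Im (g (mkC (x s) (y s)))) t).
    - apply derivable_pt_lim_plus; auto.
    - apply is_derive_Reals. apply is_derive_ext with (fun s => strip_im a (u s) s).
      + intro s. symmetry. exact (f_equal Im (Hsum_curve s)).
      + apply is_derive_Reals; auto. }
  (* the velocity of the curve does not vanish, so |B| < |A| *)
  assert (Hvel : 0 < Cnorm2 (mkC x' y')).
  { apply Cnorm2_pos. intro E. unfold A, B in HIm. rewrite E in HIm.
    unfold Cmul, Cx0, RtoC in HIm; simpl in HIm. lra. }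
  assert (HAB : Cnorm2 B < Cnorm2 A).
  { unfold A, B. rewrite !Cnorm2_mul. apply Rmult_lt_compat_r; auto. }
  exists (Im A - Im B). split.
  - apply derivable_pt_lim_minus; auto.
  - apply shear_slope_pos; auto. lra.
Qed.

Lemma level_curve_through z1 z2 : inE z1 -> inE z2 -> Re (f z1) = Re (f z2) ->
  exists (gamma : R -> Cx) t1 t2, gamma t1 = z1 /\ gamma t2 = z2 /\
    (forall s, inE (gamma s)) /\
    (forall s, Re (f (gamma s)) = Re (f z1)) /\
    (forall s t, s < t -> Im (f (gamma s)) < Im (f (gamma t))) /\
    continuity (fun s => Im (f (gamma s))).
Proof.
  intros H1 H2 HR.
  destruct (cayley_onto z1 H1) as [U1 [t1 [HU1 E1]]].
  destruct (cayley_onto z2 H2) as [U2 [t2 [HU2 E2]]].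
  subst z1 z2. rewrite !shear_re_on_cayley in HR by auto.
  destruct (level_curve_exists a _ U1 t1 Ha HU1 eq_refl) as [u [u' [Hd [Hp Hc]]]].
  assert (Hu1 : u t1 = U1) by (apply (strip_re_inj a _ _ t1); auto; rewrite Hc; auto).
  assert (Hu2 : u t2 = U2) by (apply (strip_re_inj a _ _ t2); auto; rewrite Hc; auto).
  exists (fun s => cayley (u s) s), t1, t2.
  rewrite Hu1, Hu2. repeat split; auto.
  - intro s. apply cayley_inE; auto.
  - intro s. rewrite !shear_re_on_cayley by auto. apply Hc.
  - apply strictly_increasing_of_deriv. intro s.
    exact (shear_increasing_on_level _ u u' s Hd Hp Hc).
  - intro s. destruct (shear_increasing_on_level _ u u' s Hd Hp Hc) as [d [Hd' _]].
    apply derivable_continuous_pt. exists d. exact Hd'.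
Qed.

Lemma shear_injective z1 z2 : inE z1 -> inE z2 -> f z1 = f z2 -> z1 = z2.
Proof.
  intros H1 H2 Heq.
  destruct (level_curve_through z1 z2 H1 H2 (f_equal Re Heq))
    as [gamma [t1 [t2 [<- [<- [_ [_ [Hinc _]]]]]]]].
  destruct (Rtotal_order t1 t2) as [Hl|[->|Hl]]; auto;
    specialize (Hinc _ _ Hl); rewrite Heq in Hinc; lra.
Qed.

Lemma shear_convex_imag_dir : convex_imag_dir (image_E f).
Proof.
  intros w1 w2 [z1 [H1 <-]] [z2 [H2 <-]] HR s Hs.
  destruct (level_curve_through z1 z2 H1 H2 HR)
    as [gamma [t1 [t2 [E1 [E2 [Hin [HRe [_ Hcont]]]]]]]].
  set (yv := s * Im (f z1) + (1 - s) * Im (f z2)).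
  destruct (IVT_gen (fun s => Im (f (gamma s))) t1 t2 yv Hcont) as [tau [_ Htau]].
  { cbv beta. rewrite E1, E2. unfold yv, Rmin, Rmax.
    destruct (Rle_dec (Im (f z1)) (Im (f z2))); destruct Hs; split; nra. }
  exists (gamma tau). split; auto.
  apply Cx_ext; [apply HRe|exact Htau].
Qed.

End Shear.

(** ** Convex combinations *)

(* The condition Re ((1 - w1 conj w2) h1' conj h2') > 0 on two dilatations w1, w2 of
   modulus < 1 makes |t w1 h1' + (1-t) w2 h2'| < |t h1' + (1-t) h2'|: the difference
   of the squared moduli is t^2 |h1'|^2 (1 - |w1|^2) + (1-t)^2 |h2'|^2 (1 - |w2|^2)
   + 2 t (1-t) Re ((1 - w1 conj w2) h1' conj h2'). *)
Lemma lincomb_dilatation_lt (t : R) (H1 H2 W1 W2 : Cx) : 0 <= t <= 1 ->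
  Cnorm2 W1 < 1 -> Cnorm2 W2 < 1 -> 0 < Cnorm2 H1 -> 0 < Cnorm2 H2 ->
  0 < Re (Cmul (Csub Cx1 (Cmul W1 (Defs.Cconj W2))) (Cmul H1 (Defs.Cconj H2))) ->
  Cnorm2 (Cadd (Cmul (Defs.RtoC t) (Cmul W1 H1)) (Cmul (Defs.RtoC (1 - t)) (Cmul W2 H2))) <
  Cnorm2 (Cadd (Cmul (Defs.RtoC t) H1) (Cmul (Defs.RtoC (1 - t)) H2)).
Proof.
  intros Ht HW1 HW2 HH1 HH2 HZ.
  set (X := Cnorm2 H1 * (1 - Cnorm2 W1)). set (Y := Cnorm2 H2 * (1 - Cnorm2 W2)).
  set (Z := Re (Cmul (Csub Cx1 (Cmul W1 (Defs.Cconj W2))) (Cmul H1 (Defs.Cconj H2)))) in *.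
  assert (HX : 0 < X) by (unfold X; nra). assert (HY : 0 < Y) by (unfold Y; nra).
  assert (E : Cnorm2 (Cadd (Cmul (Defs.RtoC t) H1) (Cmul (Defs.RtoC (1 - t)) H2)) -
     Cnorm2 (Cadd (Cmul (Defs.RtoC t) (Cmul W1 H1)) (Cmul (Defs.RtoC (1 - t)) (Cmul W2 H2)))
     = t * t * X + (1 - t) * (1 - t) * Y + 2 * t * (1 - t) * Z).
  { unfold X, Y, Z. destruct H1, H2, W1, W2.
    unfold Cnorm2, Cadd, Cmul, Csub, Defs.Cconj, Cx1, Defs.RtoC; simpl. ring. }
  assert (0 <= 2 * t * (1 - t) * Z) by (apply Rmult_le_pos; nra).
  destruct (Req_dec t 0) as [->|Ht0]; [nra|].
  assert (0 < t * t * X) by (apply Rmult_lt_0_compat; nra).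
  assert (0 <= (1 - t) * (1 - t) * Y) by (apply Rmult_le_pos; nra).
  lra.
Qed.

Lemma lincomb_analytic t u v u' v' :
  analytic_on_E u u' -> analytic_on_E v v' -> analytic_on_E (lincomb t u v) (lincomb t u' v').
Proof. intros Hu Hv z Hz. unfold lincomb. apply (cderiv_lincomb u v); auto. Qed.

Lemma strip_map_affine a1 a2 t z :
  Cadd (Cmul (Defs.RtoC t) (strip_map a1 z)) (Cmul (Defs.RtoC (1 - t)) (strip_map a2 z))
  = strip_map (t * a1 + (1 - t) * a2) z.
Proof.
  apply toC_inj. unfold strip_map. push_toC.
  rewrite !RtoC_plus, !RtoC_mult, !RtoC_minus. unfold Complex.Cdiv.
  set (I := Complex.Cinv (1 - toC z * toC z)). ring.
Qed.

Lemma dilat_factor (h' g' : Cx -> Cx) z : h' z <> Cx0 -> g' z = Cmul (dilat h' g' z) (h' z).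
Proof.
  intros Hn. apply toC_inj. unfold dilat. push_toC.
  assert (toC (h' z) <> 0%C) by (intro E; apply Hn; apply toC_inj; rewrite E; reflexivity).
  field. auto.
Qed.

Lemma lincomb_dilatation_on_E t h1 g1 h1' g1' h2 g2 h2' g2' : 0 <= t <= 1 ->
  in_SH h1 g1 h1' g1' -> in_SH h2 g2 h2' g2' ->
  (forall z, inE z ->
     0 < Re (Cmul (Csub Cx1 (Cmul (dilat h1' g1' z) (Cconj (dilat h2' g2' z))))
                  (Cmul (h1' z) (Cconj (h2' z))))) ->
  forall z, inE z -> Cnorm2 (lincomb t g1' g2' z) < Cnorm2 (lincomb t h1' h2' z).
Proof.
  intros Ht [_ [_ [Nh1 [Dl1 _]]]] [_ [_ [Nh2 [Dl2 _]]]] HRe z Hz.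
  unfold lincomb. rewrite (dilat_factor h1' g1' z), (dilat_factor h2' g2' z) by auto.
  apply lincomb_dilatation_lt; auto using inE_norm, Cnorm2_pos.
  - apply inE_norm, Dl1, Hz.
  - apply inE_norm, Dl2, Hz.
Qed.

Lemma harm_lincomb t h1 g1 h2 g2 z :
  harm (lincomb t h1 h2) (lincomb t g1 g2) z = lincomb t (harm h1 g1) (harm h2 g2) z.
Proof. apply Cx_ext; unfold harm, lincomb; simpl; ring. Qed.

Theorem mainTheorem9 :
  forall (a1 a2 : R) (h1 g1 h1' g1' h2 g2 h2' g2' : Cx -> Cx),
    -1 <= a1 <= 1 -> -1 <= a2 <= 1 ->
    in_SH h1 g1 h1' g1' -> in_SH h2 g2 h2' g2' ->
    (forall z, inE z -> Cadd (h1 z) (g1 z) = strip_map a1 z) ->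
    (forall z, inE z -> Cadd (h2 z) (g2 z) = strip_map a2 z) ->
    (forall z, inE z ->
       0 < Re (Cmul (Csub Cx1 (Cmul (dilat h1' g1' z) (Cconj (dilat h2' g2' z))))
                    (Cmul (h1' z) (Cconj (h2' z))))) ->
    forall t, 0 <= t <= 1 ->
      in_SH (lincomb t h1 h2) (lincomb t g1 g2)
            (lincomb t h1' h2') (lincomb t g1' g2') /\
      convex_imag_dir (image_E (harm (lincomb t h1 h2) (lincomb t g1 g2))).
Proof.
  intros a1 a2 h1 g1 h1' g1' h2 g2 h2' g2' Ha1 Ha2 SH1 SH2 HF1 HF2 HRe t Ht.
  pose proof SH1 as [Ah1 [Ag1 [_ [_ [_ [Z1 O1]]]]]].
  pose proof SH2 as [Ah2 [Ag2 [_ [_ [_ [Z2 O2]]]]]].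
  (* the combination is a shear of F_a with a = t a1 + (1 - t) a2 *)
  assert (Ha : -1 <= t * a1 + (1 - t) * a2 <= 1) by nra.
  assert (Ah := lincomb_analytic t h1 h2 h1' h2' Ah1 Ah2).
  assert (Ag := lincomb_analytic t g1 g2 g1' g2' Ag1 Ag2).
  assert (Hdil := lincomb_dilatation_on_E t _ _ _ _ _ _ _ _ Ht SH1 SH2 HRe).
  assert (Hsum : forall z, inE z ->
            Cadd (lincomb t h1 h2 z) (lincomb t g1 g2 z) = strip_map (t * a1 + (1 - t) * a2) z).
  { intros z Hz. rewrite <- strip_map_affine, <- HF1, <- HF2 by auto.
    apply Cx_ext; unfold lincomb; simpl; ring. }
  split; [repeat split|].
  - exact Ah.
  - exact Ag.
  - intros z Hz. exact (nonzero_of_norm2_lt _ _ (Hdil z Hz)).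
  - intros z Hz. apply Cabs_div_lt1, Hdil, Hz.
  - exact (shear_injective _ _ _ _ _ Ha Ah Ag Hdil Hsum).
  - rewrite harm_lincomb. unfold lincomb. rewrite Z1, Z2. apply Cx_ext; simpl; ring.
  - unfold lincomb. rewrite O1, O2. apply Cx_ext; simpl; ring.
  - exact (shear_convex_imag_dir _ _ _ _ _ Ha Ah Ag Hdil Hsum).
Qed.
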